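(* Let $G$ and $H$ be finite nilpotent groups each of which has at least two non-abelian Sylow subgroups. If $\Gamma_G\cong\Gamma_H$, then $|G|=|H|$.
   Context: For a non-abelian group $G$ with center $Z(G)$, the non-commuting graph $\Gamma_G$ is the simple graph with vertex set $G\setminus Z(G)$ in which two distinct vertices $x,y$ are adjacent if and only if $xy\neq yx$. *)

From mathcomp Require Import all_boot all_order all_fingroup all_solvable.
Set Implicit Arguments. Unset Strict Implicit. Unset Printing Implicit Defensive.
Local Open Scope group_scope.

Definition nc_vertices (gT : finGroupType) (G : {group gT}) : {set gT} :=
  G :\: 'Z(G).

Definition nc_adj (gT : finGroupType) (G : {group gT}) (x y : gT) : bool :=
  [&& x \in nc_vertices G, y \in nc_vertices G, x != y & x * y != y * x].

Definition nc_graph_iso (gT hT : finGroupType) (G : {group gT}) (H : {group hT}) : Prop :=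
  exists f : gT -> hT,
    [/\ {in nc_vertices G &, injective f},
        f @: nc_vertices G = nc_vertices H &
        {in nc_vertices G &, forall x y, nc_adj H (f x) (f y) = nc_adj G x y}].

Definition two_nonabelian_sylows (gT : finGroupType) (G : {group gT}) : Prop :=
  exists p q : nat, exists P Q : {group gT},
    [/\ [&& prime p, prime q & p != q], P \in 'Syl_p(G), Q \in 'Syl_q(G), ~~ abelian P & ~~ abelian Q].

From mathcomp Require Import all_boot all_order all_fingroup all_solvable.
From mathcomp Require Import zify.
Set Implicit Arguments. Unset Strict Implicit. Unset Printing Implicit Defensive.

(* For a set S of vertices of the non-commuting graph of G, the vertices
   adjacent to no element of S are exactly C_G(S) \ Z(G).  Their number is a
   graph invariant, so a graph isomorphism f between G and H shifts every
   centraliser order by the same amount: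
       |C_G(S)| + |Z(H)| = |C_H(f S)| + |Z(G)|,
   and for S empty this gives |G| + |Z(H)| = |H| + |Z(G)|.
   In a nilpotent group with two non-abelian Sylow subgroups there are
   non-central x, y with C_G(x) C_G(y) = G, i.e. the product formula
   |C(x)| |C(y)| <= |G| |C(x) /\ C(y)| is an equality.  If Z(H) were smaller
   than Z(G), the corresponding orders in H would be those of G lowered by
   k > 0, and an elementary computation shows the product bound then fails
   in H; hence |Z(G)| <= |Z(H)|.  By symmetry
   of graph isomorphism the centres have equal orders, hence |G| = |H|. *)

Lemma shifted_product_identity (a b c n k : nat) :
  0 < k -> a < n -> b < n ->
  (a + k) * (b + k) = (n + k) * (c + k) -> n * c < a * b.
Proof.
move=> k_gt0 lt_an lt_bn eq_prod.
have lt_sum : a + b < n + c.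
  have : 0 < (n - a) * (n - b) by rewrite muln_gt0 !subn_gt0 lt_an lt_bn.
  nia.
nia.
Qed.

Local Open Scope group_scope.

(* In a subgroup L the product formula bounds the centraliser of a union:
   |C_L(A)| |C_L(B)| = |C_L(A) C_L(B)| |C_L(A \/ B)| <= |L| |C_L(A \/ B)|. *)
Lemma card_subcent_mul_le (gT : finGroupType) (L : {group gT}) (A B : {set gT}) :
  (#|'C_L(A)| * #|'C_L(B)| <= #|L| * #|'C_L(A :|: B)|)%N.
Proof.
have -> : 'C_L(A :|: B) = 'C_L(A) :&: 'C_L(B) by rewrite centU -setIIr.
by rewrite mul_cardG leq_mul2r subset_leq_card ?orbT // mul_subG ?subsetIl.
Qed.

Lemma nc_nonadjE (gT : finGroupType) (G : {group gT}) (x y : gT) :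
  x \in nc_vertices G -> y \in nc_vertices G -> ~~ nc_adj G x y = (x * y == y * x).
Proof.
move=> Vx Vy; rewrite /nc_adj Vx Vy /= negb_and negbK.
by case: (eqVneq x y) => [->|_]; rewrite ?eqxx ?negbK.
Qed.

Definition nc_nonneighbours (gT : finGroupType) (G : {group gT}) (S : {set gT}) :=
  [set v in nc_vertices G | [forall s in S, ~~ nc_adj G s v]].

Lemma nc_nonneighboursE (gT : finGroupType) (G : {group gT}) (S : {set gT}) :
  S \subset nc_vertices G -> nc_nonneighbours G S = 'C_G(S) :\: 'Z(G).
Proof.
move=> sSV; apply/setP=> v.
rewrite inE [RHS]in_setD [v \in 'C_G(S)]in_setI andbA -in_setD -/(nc_vertices G).
case Vv: (v \in nc_vertices G) => //=.
apply/forall_inP/centP=> [noadj s Ss | cSv s Ss].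
  by apply/esym/eqP; rewrite -(@nc_nonadjE _ G) ?(subsetP sSV s Ss) ?noadj.
by rewrite nc_nonadjE ?(subsetP sSV s Ss) // (cSv s Ss).
Qed.

Lemma card_nc_nonneighbours (gT : finGroupType) (G : {group gT}) (S : {set gT}) :
  S \subset nc_vertices G -> (#|nc_nonneighbours G S| + #|'Z(G)| = #|'C_G(S)|)%N.
Proof.
move=> sSV; have sSG : S \subset G by apply: subset_trans sSV (subsetDl _ _).
have sZC : 'Z(G) \subset 'C_G(S) by rewrite setIS // centS.
by rewrite nc_nonneighboursE // -(cardsID 'Z(G) 'C_G(S)) (setIidPr sZC) addnC.
Qed.

Lemma nc_iso_nonneighbours (gT hT : finGroupType) (G : {group gT}) (H : {group hT})
    (f : gT -> hT) (S : {set gT}) :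
  f @: nc_vertices G = nc_vertices H ->
  {in nc_vertices G &, forall x y, nc_adj H (f x) (f y) = nc_adj G x y} ->
  S \subset nc_vertices G -> f @: nc_nonneighbours G S = nc_nonneighbours H (f @: S).
Proof.
move=> imfV adjf sSV; apply/setP=> w; apply/imsetP/idP.
  case=> v; rewrite inE => /andP[Vv noadj] ->.
  rewrite inE -imfV imset_f //=; apply/forall_inP=> _ /imsetP[s Ss ->].
  by rewrite adjf ?(subsetP sSV s Ss) //; apply: (forall_inP noadj).
rewrite inE -{1}imfV => /andP[/imsetP[v Vv ->] noadj]; exists v => //.
rewrite inE Vv; apply/forall_inP=> s Ss.
by rewrite -adjf ?(subsetP sSV s Ss) //; apply: (forall_inP noadj); rewrite imset_f.
Qed.

Lemma subcent0 (gT : finGroupType) (G : {group gT}) : 'C_G(set0) = G.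
Proof. by apply/setIidPl/centsP=> x _ y; rewrite inE. Qed.

Section GraphIsomorphism.

Variables (gT hT : finGroupType) (G : {group gT}) (H : {group hT}) (f : gT -> hT).
Hypotheses (injf : {in nc_vertices G &, injective f})
           (imfV : f @: nc_vertices G = nc_vertices H)
           (adjf : {in nc_vertices G &, forall x y, nc_adj H (f x) (f y) = nc_adj G x y}).

Lemma card_subcent_iso (S : {set gT}) :
  S \subset nc_vertices G ->
  (#|'C_G(S)| + #|'Z(H)| = #|'C_H(f @: S)| + #|'Z(G)|)%N.
Proof.
move=> sSV; have sfSV : f @: S \subset nc_vertices H by rewrite -imfV imsetS.
have sNV : nc_nonneighbours G S \subset nc_vertices G by apply/subsetP=> v; rewrite inE => /andP[].
rewrite -card_nc_nonneighbours // -(card_nc_nonneighbours sfSV).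
rewrite -(nc_iso_nonneighbours imfV adjf sSV) (card_in_imset (sub_in2 (subsetP sNV) injf)).
lia.
Qed.

Lemma card_group_iso : (#|G| + #|'Z(H)| = #|H| + #|'Z(G)|)%N.
Proof. by have := card_subcent_iso (sub0set _); rewrite imset0 !subcent0. Qed.

Lemma nc_graph_iso_inv : nc_graph_iso H G.
Proof.
pose g w := odflt 1 [pick v in nc_vertices G | f v == w].
have gK w : w \in nc_vertices H -> g w \in nc_vertices G /\ f (g w) = w.
  rewrite -imfV /g => /imsetP[v Vv ->].
  case: pickP => [u /andP[Vu /eqP //]|]; by move/(_ v); rewrite Vv eqxx.
exists g; split.
- by move=> w1 w2 /gK[_ e1] /gK[_ e2] eg; rewrite -e1 -e2 eg.
- apply/setP=> v; apply/imsetP/idP=> [[w /gK[Vgw _] -> //]|Vv].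
  have fVH : f v \in nc_vertices H by rewrite -imfV imset_f.
  exists (f v) => //; have [Vg fgK] := gK _ fVH.
  by apply: injf; rewrite ?fgK.
- by move=> w1 w2 /gK[V1 e1] /gK[V2 e2]; rewrite -adjf // e1 e2.
Qed.

End GraphIsomorphism.

Lemma subcent1_proper (gT : finGroupType) (G : {group gT}) (x : gT) :
  x \in nc_vertices G -> #|'C_G([set x])| < #|G|.
Proof.
rewrite inE => /andP[nZx Gx]; apply: proper_card; rewrite properEneq subsetIl andbT.
apply: contra nZx => /eqP CG; apply/centerP; split=> // u Gu.
by move: Gu; rewrite -CG => /subcentP[_ /(_ x (set11 x))].
Qed.

Lemma nonabelian_noncentral (gT : finGroupType) (G K : {group gT}) :
  K \subset G -> ~~ abelian K -> exists2 x, x \in K & x \in nc_vertices G.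
Proof.
move=> sKG /subsetPn[x Kx nCx]; exists x => //.
rewrite inE (subsetP sKG) // andbT; apply: contra nCx => /centerP[_ cx].
by apply/centP=> u Ku; apply: cx; apply: (subsetP sKG).
Qed.

(* In a nilpotent group with non-abelian Sylow subgroups for two primes there
   are vertices x, y with C_G(x) C_G(y) = G: take x in the p-part and y in
   the p'-part of G, which centralise each other's factor. *)
Lemma nilpotent_cover_centralisers (gT : finGroupType) (G : {group gT}) :
  nilpotent G -> two_nonabelian_sylows G ->
  exists x y, [/\ x \in nc_vertices G, y \in nc_vertices G &
                 'C_G([set x]) * 'C_G([set y]) = G].
Proof.
move=> nilG [p [q [P [Q [/and3P[_ _ neq_pq]]]]]].
rewrite !inE => sylP sylQ nabP nabQ.
have sPG := pHall_sub sylP; have sQG := pHall_sub sylQ.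
have sPOp : P \subset 'O_p(G).
  by rewrite (sub_Hall_pcore (nilpotent_pcore_Hall p nilG)) ?(pHall_pgroup sylP).
have sQOp' : Q \subset 'O_p^'(G).
  rewrite (sub_Hall_pcore (nilpotent_pcore_Hall p^' nilG)) //.
  by apply: pi_pgroup (pHall_pgroup sylQ) _; rewrite !inE eq_sym.
have [_ defG cOpOp' _] := dprodP (etrans (dprodC _ _) (nilpotent_pcoreC p nilG)).
have [x Px Vx] := nonabelian_noncentral sPG nabP.
have [y Qy Vy] := nonabelian_noncentral sQG nabQ.
exists x, y; split=> //; apply/eqP; rewrite eqEsubset mul_subG ?subsetIl //=.
rewrite -{1}defG mulgSS // subsetI pcore_sub /= centsC sub1set.
  exact: subsetP cOpOp' x (subsetP sPOp x Px).
by rewrite centsC in cOpOp'; apply: subsetP cOpOp' y (subsetP sQOp' y Qy).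
Qed.

Lemma card_center_le_iso (gT hT : finGroupType) (G : {group gT}) (H : {group hT}) :
  nilpotent G -> two_nonabelian_sylows G -> nc_graph_iso G H ->
  #|'Z(G)| <= #|'Z(H)|.
Proof.
move=> nilG twG [f [injf imfV adjf]].
have [x [y [Vx Vy CxCy]]] := nilpotent_cover_centralisers nilG twG.
have sxV : [set x] \subset nc_vertices G by rewrite sub1set.
have syV : [set y] \subset nc_vertices G by rewrite sub1set.
have shift := card_subcent_iso injf imfV adjf.
have eG := card_group_iso injf imfV adjf.
have ex := shift _ sxV; have ey := shift _ syV.
have sxyV : [set x] :|: [set y] \subset nc_vertices G by rewrite subUset sxV.
have exy := shift _ sxyV; rewrite imsetU in exy.
have eq_prod : (#|'C_G([set x])| * #|'C_G([set y])| = #|G| * #|'C_G([set x] :|: [set y])|)%N.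
  by rewrite centU setIIr mul_cardG CxCy.
have le_H := card_subcent_mul_le H (f @: [set x]) (f @: [set y]).
have lt_x := subcent1_proper Vx; have lt_y := subcent1_proper Vy.
(* If |Z(H)| < |Z(G)|, the H-data are the G-data lowered by
   k = |Z(G)| - |Z(H)| > 0, so the product identity in G forces the product
   bound to fail in H. *)
rewrite leqNgt; apply/negP=> lt_ZHG; move: le_H; apply/negP; rewrite -ltnNge.
by apply: (shifted_product_identity (k := #|'Z(G)| - #|'Z(H)|)); lia.
Qed.

Theorem corollary2p5 (gT hT : finGroupType) (G : {group gT}) (H : {group hT}) :
  nilpotent G -> nilpotent H ->
  two_nonabelian_sylows G -> two_nonabelian_sylows H ->
  nc_graph_iso G H ->
  #|G| = #|H|.
Proof.
move=> nilG nilH twG twH isoGH.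
have le_GH := card_center_le_iso nilG twG isoGH.
have [f [injf imfV adjf]] := isoGH.
have le_HG := card_center_le_iso nilH twH (nc_graph_iso_inv injf imfV adjf).
have := card_group_iso injf imfV adjf; lia.
Qed.
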